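(* Let $G$ be a polarized and anchored progressive graph. Then there exists at most one planar order $\prec$ on $E(G)$ such that: (1) $e_1\to e_2$ implies $e_1\prec e_2$; (2) for every vertex $v$ and $e_1,e_2\in I(v)$, $e_1<e_2$ in $I(v)$ iff $e_1\prec e_2$, and for $e_1,e_2\in O(v)$, $e_1<e_2$ in $O(v)$ iff $e_1\prec e_2$; (3) for $i_1,i_2\in I(G)$, $i_1<i_2$ in $I(G)$ iff $i_1\prec i_2$, and for $o_1,o_2\in O(G)$, $o_1<o_2$ in $O(G)$ iff $o_1\prec o_2$.
   Context: A progressive graph is a finite directed acyclic graph (parallel edges allowed) in which every source and every sink has degree one; degree-one vertices are boundary vertices. $I(G)$ (input edges) is the set of edges whose initial vertex is a boundary vertex, $O(G)$ (output edges) those whose terminal vertex is a boundary vertex. For a vertex $v$, $I(v)$ and $O(v)$ are its sets of incoming and outgoing edges. For edges write $e\to e'$ if $e\neq e'$ and there is a directed path whose first edge is $e$ and last edge is $e'$. A planar order on $G$ is a linear order $\prec$ on $E(G)$ such that (P1) $e_1\to e_2$ implies $e_1\prec e_2$; (P2) if $e_1\prec e_2\prec e_3$ and $e_1\to e_3$ then $e_1\to e_2$ or $e_2\to e_3$. $G$ is polarized if for every vertex $v$, linear orders $<$ on $I(v)$ and on $O(v)$ are given; $G$ is anchored if linear orders $<$ on $I(G)$ and on $O(G)$ are given. *)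

From mathcomp Require Import all_boot.
Set Implicit Arguments. Unset Strict Implicit. Unset Printing Implicit Defensive.

Section Progressive.
Variables (V E : finType) (src tgt : E -> V).

Definition in_edges (v : V) : pred E := fun e => tgt e == v.
Definition out_edges (v : V) : pred E := fun e => src e == v.
Definition indeg (v : V) : nat := #|in_edges v|.
Definition outdeg (v : V) : nat := #|out_edges v|.
Definition deg (v : V) : nat := indeg v + outdeg v.

Definition eadj : rel E := fun e f => tgt e == src f.

Definition epath (e e' : E) : bool := (e != e') && connect eadj e e'.

Definition acyclic : Prop := forall e f, eadj e f -> ~~ connect eadj f e.

Definition is_boundary (v : V) : bool := deg v == 1.

Definition progressive : Prop :=
  acyclic /\ forall v, (indeg v == 0) || (outdeg v == 0) -> deg v == 1.

Definition input_edges : pred E := fun e => is_boundary (src e).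
Definition output_edges : pred E := fun e => is_boundary (tgt e).

Definition lin_order_on (S : pred E) (r : rel E) : Prop :=
  [/\ {in S, forall x, ~~ r x x},
      {in S & &, forall x y z, r x y -> r y z -> r x z} &
      {in S &, forall x y, x != y -> r x y || r y x}].

Definition planar_order (prec : rel E) : Prop :=
  [/\ lin_order_on predT prec,
      (forall e1 e2, epath e1 e2 -> prec e1 e2) &
      (forall e1 e2 e3, prec e1 e2 -> prec e2 e3 -> epath e1 e3 ->
          epath e1 e2 || epath e2 e3)].

Definition polarized (ltI ltO : V -> rel E) : Prop :=
  forall v, lin_order_on (in_edges v) (ltI v) /\ lin_order_on (out_edges v) (ltO v).

Definition anchored (ltIG ltOG : rel E) : Prop :=
  lin_order_on input_edges ltIG /\ lin_order_on output_edges ltOG.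

Definition compatible_order (ltI ltO : V -> rel E) (ltIG ltOG : rel E)
    (prec : rel E) : Prop :=
  [/\ (forall e1 e2, epath e1 e2 -> prec e1 e2),
      (forall v, {in in_edges v &, forall e1 e2, ltI v e1 e2 = prec e1 e2} /\
                 {in out_edges v &, forall e1 e2, ltO v e1 e2 = prec e1 e2}) &
      ({in input_edges &, forall i1 i2, ltIG i1 i2 = prec i1 i2} /\
       {in output_edges &, forall o1 o2, ltOG o1 o2 = prec o1 o2})].

End Progressive.

(* Compare two compatible planar orders on a pair of distinct edges e, f by
   well-founded induction on the number of ancestors of e and f.  Directed
   paths and a common source settle the comparison directly.  Otherwise, if e
   has an immediate predecessor g unrelated to f by paths, axiom (P2) forces
   e and g to lie on the same side of f, so the comparison moves to the
   smaller pair (g, f); symmetrically for f.  If neither reduction applies,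
   every predecessor of e reaches f and vice versa; acyclicity then shows
   that e and f have no predecessors at all, so both are input edges and the
   anchoring decides. *)

From mathcomp Require Import all_boot.
Set Implicit Arguments. Unset Strict Implicit. Unset Printing Implicit Defensive.

Section EdgePaths.
Variables (V E : finType) (src tgt : E -> V).
Local Notation eadj := (eadj src tgt).
Local Notation epath := (epath src tgt).

Lemma connect_first_step x y :
  connect eadj x y -> x != y -> exists2 z, eadj x z & connect eadj z y.
Proof.
case/connectP=> [[|z p]] /= => [_ -> | /andP[xz zp] ->]; first by rewrite eqxx.
by exists z => //; apply/connectP; exists p.
Qed.

Lemma epath_last_step x y : epath x y -> exists2 z, eadj z y & connect eadj x z.
Proof.
case/andP=> neq_xy /connectP[p]; elim/last_ind: p => [|p z _] /=.
  by move=> _ eq_yx; rewrite eq_yx eqxx in neq_xy.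
rewrite rcons_path last_rcons => /andP[xp pz] ->.
by exists (last x p) => //; apply/connectP; exists p.
Qed.

Definition ancestors (e : E) : {set E} := [set g | connect eadj g e].

Hypothesis acyclicG : acyclic src tgt.

Lemma eadj_irr x : ~~ eadj x x.
Proof. by apply/negP => xx; move: (acyclicG xx); rewrite connect0. Qed.

Lemma eadj_neq x y : eadj x y -> x != y.
Proof. by move=> xy; apply: contraNneq (eadj_irr x) => eq_xy; rewrite {2}eq_xy. Qed.

Lemma epath_eadj x y : eadj x y -> epath x y.
Proof. by move=> xy; rewrite /epath eadj_neq // connect1. Qed.

Lemma connect_antisym x y : connect eadj x y -> connect eadj y x -> x = y.
Proof.
move=> xy yx; apply/eqP/negPn/negP => /(connect_first_step xy)[z xz zy].
by move: (acyclicG xz); rewrite (connect_trans zy yx).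
Qed.

(* Two edges entering the same vertex are never joined by a path: its first
   step would leave that vertex, closing a cycle through the second edge. *)
Lemma connect_same_tgt x y : tgt x = tgt y -> connect eadj x y -> x = y.
Proof.
move=> same_tgt xy; apply/eqP/negPn/negP => /(connect_first_step xy)[z xz zy].
have yz : eadj y z by rewrite /eadj -same_tgt.
by move: (acyclicG yz); rewrite zy.
Qed.

Lemma ancestors_proper g e : eadj g e -> ancestors g \proper ancestors e.
Proof.
move=> ge; apply/properP; split.
  by apply/subsetP => y; rewrite !inE => yg; apply: connect_trans yg (connect1 ge).
by exists e; rewrite !inE ?connect0 //; apply/negP => eg; move: (acyclicG ge); rewrite eg.
Qed.

Lemma mutual_reach_same_src e f g :
    (forall h, eadj h e -> epath h f) -> (forall h, eadj h f -> epath h e) ->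
  eadj g e -> src e = src f.
Proof.
move=> reach_e reach_f ge.
have [h hf gh] := epath_last_step (reach_e g ge).
have [k ke hk] := epath_last_step (reach_f h hf).
have tgt_gk : tgt g = tgt k by move: ge ke; rewrite /eadj => /eqP-> /eqP->.
have eq_gk := connect_same_tgt tgt_gk (connect_trans gh hk).
rewrite -{}eq_gk in hk; have eq_gh := connect_antisym gh hk.
by move: ge hf; rewrite /eadj -eq_gh => /eqP<- /eqP.
Qed.

End EdgePaths.

Lemma no_pred_input (V E : finType) (src tgt : E -> V) e :
  progressive src tgt -> (forall g, ~~ eadj src tgt g e) -> input_edges src tgt e.
Proof.
case=> _ boundary no_pred; apply: boundary; apply/orP; left.
apply/eqP/eq_card0 => g; rewrite unfold_in /in_edges.
by apply/negP => /eqP tgt_g; move: (no_pred g); rewrite /eadj tgt_g eqxx.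
Qed.

Section PlanarOrder.
Variables (V E : finType) (src tgt : E -> V).
Local Notation eadj := (eadj src tgt).
Local Notation epath := (epath src tgt).
Variable prec : rel E.
Hypothesis planar : planar_order src tgt prec.

Lemma planar_irr x : ~~ prec x x.
Proof. by case: planar => [[irr _ _] _ _]; apply: irr. Qed.

Lemma planar_trans x y z : prec x y -> prec y z -> prec x z.
Proof. by case: planar => [[_ trans _] _ _]; apply: trans. Qed.

Lemma planar_total x y : x != y -> prec x y || prec y x.
Proof. by case: planar => [[_ _ total] _ _]; apply: total. Qed.

Lemma planar_epath x y : epath x y -> prec x y.
Proof. by case: planar => [_ path_prec _]; apply: path_prec. Qed.

Lemma planar_between x y z :
  prec x y -> prec y z -> epath x z -> epath x y || epath y z.
Proof. by case: planar => [_ _ between]; apply: between. Qed.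

Lemma planar_asym x y : x != y -> prec x y = ~~ prec y x.
Proof.
move=> neq_xy; case xy: (prec x y); case yx: (prec y x) => //=.
  by move: (planar_irr x); rewrite (planar_trans xy yx).
by move: (planar_total neq_xy); rewrite xy yx.
Qed.

Hypothesis acyclicG : acyclic src tgt.

(* If e and f were separated by the immediate predecessor g of e, the order
   g, f, e or e, f, g would violate (P2) along the path g -> e. *)
Lemma planar_pred_side g e f :
  eadj g e -> ~~ epath g f -> ~~ epath f e -> e != f -> prec e f = prec g f.
Proof.
move=> ge ngf nfe neq_ef.
have path_ge := epath_eadj acyclicG ge.
have neq_gf : g != f by apply: contraNneq nfe => <-.
case gf: (prec g f).
  apply/negPn/negP => nef.
  have fe : prec f e by move: (planar_total neq_ef); rewrite (negbTE nef).
  by move: (planar_between gf fe path_ge); rewrite (negbTE ngf) (negbTE nfe).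
have fg : prec f g by move: (planar_total neq_gf); rewrite gf.
by rewrite (planar_asym neq_ef) (planar_trans fg (planar_epath path_ge)).
Qed.

End PlanarOrder.

Section Uniqueness.
Variables (V E : finType) (src tgt : E -> V).
Local Notation eadj := (eadj src tgt).
Local Notation epath := (epath src tgt).
Local Notation ancestors := (ancestors src tgt).
Hypothesis progG : progressive src tgt.
Variables prec1 prec2 : rel E.
Hypotheses (planar1 : planar_order src tgt prec1)
           (planar2 : planar_order src tgt prec2).
Hypothesis agree_src : forall e f, src e = src f -> prec1 e f = prec2 e f.
Hypothesis agree_input :
  {in input_edges src tgt &, forall e f, prec1 e f = prec2 e f}.

Lemma agree_flip e f : e != f -> prec1 f e = prec2 f e -> prec1 e f = prec2 e f.
Proof. by move=> neq_ef fe; rewrite (planar_asym planar1) // (planar_asym planar2) // fe. Qed.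

Lemma agree_no_reduction e f :
    src e != src f -> (forall g, eadj g e -> epath g f) ->
    (forall h, eadj h f -> epath h e) ->
  prec1 e f = prec2 e f.
Proof.
move=> neq_src reach_e reach_f.
have no_pred_e g : ~~ eadj g e.
  by apply/negP => /(mutual_reach_same_src progG.1 reach_e reach_f)/eqP; apply/negP.
have no_pred_f h : ~~ eadj h f.
  by apply/negP => /(mutual_reach_same_src progG.1 reach_f reach_e)/eqP; rewrite eq_sym; apply/negP.
by apply: agree_input; apply: no_pred_input.
Qed.

Lemma planar_orders_eq e f : prec1 e f = prec2 e f.
Proof.
have [n] := ubnP (#|ancestors e| + #|ancestors f|).
elim: n => // n IH in e f *; rewrite ltnS => size_ef.
have smaller g e' : eadj g e' -> #|ancestors g| < #|ancestors e'|.
  by move=> ge'; apply/proper_card/(ancestors_proper progG.1).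
have [<-|neq_ef] := eqVneq e f.
  by rewrite (negbTE (planar_irr planar1 e)) (negbTE (planar_irr planar2 e)).
have [ef|nef] := boolP (epath e f); first by rewrite !(planar_epath _ ef).
have [fe|nfe] := boolP (epath f e).
  by apply: agree_flip => //; rewrite !(planar_epath _ fe).
have [/agree_src //|neq_src] := eqVneq (src e) (src f).
have [g /andP[ge ngf]|reach_e] := pickP [pred g | eadj g e & ~~ epath g f].
  rewrite !(planar_pred_side _ progG.1 ge ngf nfe neq_ef) //; apply: IH.
  by apply: leq_trans size_ef; rewrite ltn_add2r smaller.
have [h /andP[hf nhe]|reach_f] := pickP [pred h | eadj h f & ~~ epath h e].
  apply: agree_flip => //; rewrite eq_sym in neq_ef.
  rewrite !(planar_pred_side _ progG.1 hf nhe nef neq_ef) //; apply: IH.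
  by apply: leq_trans size_ef; rewrite [X in X < _]addnC ltn_add2l smaller.
apply: agree_no_reduction => // [g ge | h hf]; apply/negPn.
  by have := reach_e g; rewrite /= ge => /negbT.
by have := reach_f h; rewrite /= hf => /negbT.
Qed.

End Uniqueness.

Theorem proposition2p14 (V E : finType) (src tgt : E -> V)
    (ltI ltO : V -> rel E) (ltIG ltOG : rel E) :
  progressive src tgt ->
  polarized src tgt ltI ltO ->
  anchored src tgt ltIG ltOG ->
  forall prec1 prec2 : rel E,
    planar_order src tgt prec1 ->
    compatible_order src tgt ltI ltO ltIG ltOG prec1 ->
    planar_order src tgt prec2 ->
    compatible_order src tgt ltI ltO ltIG ltOG prec2 ->
    forall e1 e2, prec1 e1 e2 = prec2 e1 e2.
Proof.
move=> progG _ _ prec1 prec2 planar1 [_ local1 [input1 _]]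
  planar2 [_ local2 [input2 _]].
apply: (planar_orders_eq progG planar1 planar2) => [e f same_src | e f ie if_].
  have out_e : e \in out_edges src (src e) by rewrite unfold_in /out_edges.
  have out_f : f \in out_edges src (src e) by rewrite unfold_in /out_edges same_src.
  by rewrite -(proj2 (local1 (src e)) e f) // (proj2 (local2 (src e)) e f).
by rewrite -input1 // input2.
Qed.
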